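(* Let $A>0$ and let $f:[0,A]\rightarrow\mathbb{R}$ be a continuous $3$-convex function. Then \[ f(x)+f(y)+f(z)+f(x+y+z)\geq f(x+y)+f(y+z)+f(z+x)+f(0) \] for all $x,y,z\in[0,A]$ with $x+y+z\leq A$. If in addition $f(0)\geq0$, then \[ f(x)+f(y)+f(z)+f(x+y+z)\geq f(x+y)+f(y+z)+f(z+x) \] for all such $x,y,z$.
   Context: A function $f$ defined on an interval $I$ is called $3$-convex if for all $x_0<x_1<x_2<x_3$ in $I$ the third-order divided difference $[x_0,x_1,x_2,x_3;f]=\sum_{j=0}^{3}\frac{f(x_j)}{\prod_{k\neq j}(x_j-x_k)}$ is nonnegative. *)

From Stdlib Require Import Reals.
Open Scope R_scope.

Definition divdiff3 (f : R -> R) (x0 x1 x2 x3 : R) : R :=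
  f x0 / ((x0 - x1) * (x0 - x2) * (x0 - x3))
  + f x1 / ((x1 - x0) * (x1 - x2) * (x1 - x3))
  + f x2 / ((x2 - x0) * (x2 - x1) * (x2 - x3))
  + f x3 / ((x3 - x0) * (x3 - x1) * (x3 - x2)).

Definition three_convex_on (I : R -> Prop) (f : R -> R) : Prop :=
  forall x0 x1 x2 x3, I x0 -> I x1 -> I x2 -> I x3 ->
    x0 < x1 -> x1 < x2 -> x2 < x3 -> 0 <= divdiff3 f x0 x1 x2 x3.

Definition interval0A (A : R) : R -> Prop := fun x => 0 <= x <= A.

Definition continuous_on_0A (A : R) (f : R -> R) : Prop :=
  forall x, interval0A A x -> continue_in f (interval0A A) x.

From Stdlib Require Import Reals Lra.
Open Scope R_scope.

(* For fixed z the increment g(t) = f(t + z) - f(t) of a 3-convex f is convex: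
   moving one node of a second divided difference of f to the right changes it
   by the node shift times a third divided difference, so second divided
   differences of f are nondecreasing in each node, and those of g are
   differences of such values at translated nodes.  Convexity of g gives
   g(x) + g(y) <= g(0) + g(x + y), which is the inequality.  When one variable
   vanishes the inequality is an identity. *)

Definition divdiff2 (f : R -> R) (a b c : R) : R :=
  f a / ((a - b) * (a - c)) + f b / ((b - a) * (b - c)) + f c / ((c - a) * (c - b)).

Lemma divdiff2_sub (f g : R -> R) (a b c : R) :
  divdiff2 (fun t => f t - g t) a b c = divdiff2 f a b c - divdiff2 g a b c.
Proof. unfold divdiff2, Rdiv; ring. Qed.

Lemma divdiff2_shift (f : R -> R) (z a b c : R) :
  divdiff2 (fun t => f (t + z)) a b c = divdiff2 f (a + z) (b + z) (c + z).
Proof.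
  assert (Hdiff : forall u v, u + z - (v + z) = u - v) by (intros; ring).
  unfold divdiff2; rewrite !Hdiff; reflexivity.
Qed.

Lemma divdiff2_nonneg_chord (g : R -> R) (a b c : R) :
  a < b -> b < c -> 0 <= divdiff2 g a b c ->
  (c - a) * g b <= (c - b) * g a + (b - a) * g c.
Proof.
  intros Hab Hbc Hd.
  assert (E : (b - a) * (c - b) * (c - a) * divdiff2 g a b c
              = (c - b) * g a + (b - a) * g c - (c - a) * g b).
  { unfold divdiff2; field; repeat split; lra. }
  assert (0 <= (b - a) * (c - b) * (c - a) * divdiff2 g a b c).
  { repeat apply Rmult_le_pos; lra. }
  lra.
Qed.

Lemma divdiff2_nonneg_add_le (g : R -> R) (x y : R) :
  0 < x -> 0 < y ->
  0 <= divdiff2 g 0 x (x + y) -> 0 <= divdiff2 g 0 y (x + y) ->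
  g x + g y <= g 0 + g (x + y).
Proof.
  intros Hx Hy Hdx Hdy.
  pose proof (divdiff2_nonneg_chord g 0 x (x + y) Hx ltac:(lra) Hdx) as Cx.
  pose proof (divdiff2_nonneg_chord g 0 y (x + y) Hy ltac:(lra) Hdy) as Cy.
  apply Rmult_le_reg_l with (x + y); lra.
Qed.

Section ThreeConvexMonotone.

Variables (I : R -> Prop) (f : R -> R).
Hypothesis f_3convex : three_convex_on I f.

Lemma divdiff2_le_r (a b c d : R) :
  I a -> I b -> I c -> I d -> a < b -> b < c -> c <= d ->
  divdiff2 f a b c <= divdiff2 f a b d.
Proof.
  intros Ia Ib Ic Id Hab Hbc Hcd.
  destruct (Rle_lt_or_eq_dec _ _ Hcd) as [Hlt | <-]; [| lra].
  assert (E : divdiff2 f a b d - divdiff2 f a b c = (d - c) * divdiff3 f a b c d).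
  { unfold divdiff2, divdiff3; field; repeat split; lra. }
  pose proof (f_3convex a b c d Ia Ib Ic Id Hab Hbc Hlt).
  assert (0 <= (d - c) * divdiff3 f a b c d) by (apply Rmult_le_pos; lra).
  lra.
Qed.

Lemma divdiff2_le_m (a b c d : R) :
  I a -> I b -> I c -> I d -> a < b -> b <= c -> c < d ->
  divdiff2 f a b d <= divdiff2 f a c d.
Proof.
  intros Ia Ib Ic Id Hab Hbc Hcd.
  destruct (Rle_lt_or_eq_dec _ _ Hbc) as [Hlt | <-]; [| lra].
  assert (E : divdiff2 f a c d - divdiff2 f a b d = (c - b) * divdiff3 f a b c d).
  { unfold divdiff2, divdiff3; field; repeat split; lra. }
  pose proof (f_3convex a b c d Ia Ib Ic Id Hab Hlt Hcd).
  assert (0 <= (c - b) * divdiff3 f a b c d) by (apply Rmult_le_pos; lra).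
  lra.
Qed.

Lemma divdiff2_le_l (a b c d : R) :
  I a -> I b -> I c -> I d -> a <= b -> b < c -> c < d ->
  divdiff2 f a c d <= divdiff2 f b c d.
Proof.
  intros Ia Ib Ic Id Hab Hbc Hcd.
  destruct (Rle_lt_or_eq_dec _ _ Hab) as [Hlt | <-]; [| lra].
  assert (E : divdiff2 f b c d - divdiff2 f a c d = (b - a) * divdiff3 f a b c d).
  { unfold divdiff2, divdiff3; field; repeat split; lra. }
  pose proof (f_3convex a b c d Ia Ib Ic Id Hlt Hbc Hcd).
  assert (0 <= (b - a) * divdiff3 f a b c d) by (apply Rmult_le_pos; lra).
  lra.
Qed.

Lemma divdiff2_monotone (a b c a' b' c' : R) :
  I a -> I b -> I c -> I a' -> I b' -> I c' ->
  a < b -> b < c -> a' < b' -> b' < c' -> a <= a' -> b <= b' -> c <= c' ->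
  divdiff2 f a b c <= divdiff2 f a' b' c'.
Proof.
  intros Ia Ib Ic Ia' Ib' Ic' Hab Hbc Hab' Hbc' Ha Hb Hc.
  apply Rle_trans with (divdiff2 f a b c'); [now apply divdiff2_le_r |].
  apply Rle_trans with (divdiff2 f a b' c'); [now apply divdiff2_le_m |].
  now apply divdiff2_le_l.
Qed.

End ThreeConvexMonotone.

Lemma increment_divdiff2_nonneg (A : R) (f : R -> R) (z t s : R) :
  three_convex_on (interval0A A) f -> 0 <= z -> 0 < t -> t < s -> s + z <= A ->
  0 <= divdiff2 (fun u => f (u + z) - f u) 0 t s.
Proof.
  intros Hf Hz Ht Hts HA.
  rewrite divdiff2_sub, divdiff2_shift, Rplus_0_l.
  assert (divdiff2 f 0 t s <= divdiff2 f z (t + z) (s + z)); [| lra].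
  apply (divdiff2_monotone (interval0A A)); unfold interval0A; auto; lra.
Qed.

Lemma three_convex_ineq_pos (A : R) (f : R -> R) (x y z : R) :
  three_convex_on (interval0A A) f -> 0 < x -> 0 < y -> 0 < z -> x + y + z <= A ->
  f x + f y + f z + f (x + y + z) >= f (x + y) + f (y + z) + f (z + x) + f 0.
Proof.
  intros Hf Hx Hy Hz HA.
  pose proof (divdiff2_nonneg_add_le (fun u => f (u + z) - f u) x y Hx Hy
    (increment_divdiff2_nonneg A f z x (x + y) Hf ltac:(lra) Hx ltac:(lra) HA)
    (increment_divdiff2_nonneg A f z y (x + y) Hf ltac:(lra) Hy ltac:(lra) HA)) as H.
  cbv beta in H; rewrite Rplus_0_l, (Rplus_comm x z) in H.
  lra.
Qed.

Lemma three_convex_ineq (A : R) (f : R -> R) (x y z : R) :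
  three_convex_on (interval0A A) f -> 0 <= x -> 0 <= y -> 0 <= z -> x + y + z <= A ->
  f x + f y + f z + f (x + y + z) >= f (x + y) + f (y + z) + f (z + x) + f 0.
Proof.
  intros Hf Hx Hy Hz HA.
  destruct (Rle_lt_or_eq_dec _ _ Hx) as [Hx' | <-];
    [| rewrite !Rplus_0_l, Rplus_0_r; lra].
  destruct (Rle_lt_or_eq_dec _ _ Hy) as [Hy' | <-];
    [| rewrite !Rplus_0_l, !Rplus_0_r, (Rplus_comm z x); lra].
  destruct (Rle_lt_or_eq_dec _ _ Hz) as [Hz' | <-];
    [| rewrite !Rplus_0_l, !Rplus_0_r; lra].
  now apply (three_convex_ineq_pos A).
Qed.

Theorem proposition1 (A : R) (f : R -> R) :
  0 < A ->
  continuous_on_0A A f ->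
  three_convex_on (interval0A A) f ->
  (forall x y z, 0 <= x -> 0 <= y -> 0 <= z -> x + y + z <= A ->
     f x + f y + f z + f (x + y + z) >= f (x + y) + f (y + z) + f (z + x) + f 0)
  /\
  (0 <= f 0 ->
   forall x y z, 0 <= x -> 0 <= y -> 0 <= z -> x + y + z <= A ->
     f x + f y + f z + f (x + y + z) >= f (x + y) + f (y + z) + f (z + x)).
Proof.
  intros _ _ Hf.
  split.
  - intros x y z; now apply (three_convex_ineq A).
  - intros Hf0 x y z Hx Hy Hz HA.
    pose proof (three_convex_ineq A f x y z Hf Hx Hy Hz HA).
    lra.
Qed.
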